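(* Let $G$ be a $\sigma$-compact locally compact Abelian group and $\Lambda\subset G$ relatively dense. The following are equivalent: (i) $\Lambda-\Lambda-\Lambda$ is locally finite; (ii) $\Lambda-\Lambda-\Lambda$ is uniformly discrete; (iii) $\Lambda$ is locally finite and there is a finite set $F\subset G$ with $\Lambda-\Lambda\subset\Lambda+F$.
   Context: Locally finite: $A\cap K$ finite for every compact $K$. Uniformly discrete: there is an open neighbourhood $U$ of $0$ with $(x+U)\cap A=\{x\}$ for all $x\in A$. Relatively dense: $\Lambda+K=G$ for some compact $K$. *)

From HB Require Import structures.
From mathcomp Require Import all_boot all_order all_algebra.
From Stdlib Require Import List.
Set Implicit Arguments. Unset Strict Implicit. Unset Printing Implicit Defensive.
Import GRing.Theory.
Local Open Scope ring_scope.

Definition subset_of (T : Type) := T -> Prop.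

Definition is_topology (T : Type) (open : subset_of T -> Prop) : Prop :=
  [/\ open (fun _ => True),
      open (fun _ => False),
      (forall U V, open U -> open V -> open (fun x => U x /\ V x)),
      (forall (I : Type) (U : I -> subset_of T), (forall i, open (U i)) ->
          open (fun x => exists i, U i x)) &
      (forall U V, (forall x, U x <-> V x) -> open U -> open V)].

Definition compact (T : Type) (open : subset_of T -> Prop) (K : subset_of T) : Prop :=
  forall (I : Type) (U : I -> subset_of T), (forall i, open (U i)) ->
    (forall x, K x -> exists i, U i x) ->
    exists s : list I, forall x, K x -> exists i, In i s /\ U i x.

Definition hausdorff (T : Type) (open : subset_of T -> Prop) : Prop :=
  forall x y : T, x <> y -> exists U V, [/\ open U, open V, U x, V y &
    forall z, U z -> V z -> False].

Definition top_group (G : zmodType) (open : subset_of G -> Prop) : Prop :=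
  is_topology open /\
  forall (x y : G) (W : subset_of G), open W -> W (x - y) ->
    exists U V, [/\ open U, open V, U x, V y &
      forall u v, U u -> V v -> W (u - v)].

Definition locally_compact (T : Type) (open : subset_of T -> Prop) : Prop :=
  forall x : T, exists U K, [/\ open U, U x, compact open K &
    forall y, U y -> K y].

Definition sigma_compact (T : Type) (open : subset_of T -> Prop) : Prop :=
  exists K : nat -> subset_of T, (forall n, compact open (K n)) /\
    forall x, exists n, K n x.

Definition sigma_compact_LCA (G : zmodType) (open : subset_of G -> Prop) : Prop :=
  [/\ top_group open, hausdorff open, locally_compact open & sigma_compact open].

Definition finite_set (T : Type) (A : subset_of T) : Prop :=
  exists s : list T, forall x, A x -> In x s.

Definition locally_finite (T : Type) (open : subset_of T -> Prop) (A : subset_of T) :=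
  forall K, compact open K -> finite_set (fun x => A x /\ K x).

Definition uniformly_discrete (G : zmodType) (open : subset_of G -> Prop)
    (A : subset_of G) : Prop :=
  exists U, [/\ open U, U 0 &
    forall x, A x -> forall y, A y -> (exists u, U u /\ y = x + u) -> y = x].

Definition relatively_dense (G : zmodType) (open : subset_of G -> Prop)
    (L : subset_of G) : Prop :=
  exists K, compact open K /\ forall g, exists l k, [/\ L l, K k & g = l + k].

Definition diff3 (G : zmodType) (L : subset_of G) : subset_of G :=
  fun z => exists a b c, [/\ L a, L b, L c & z = a - b - c].
Definition diff2 (G : zmodType) (L : subset_of G) : subset_of G :=
  fun z => exists a b, [/\ L a, L b & z = a - b].
Definition plus_set (G : zmodType) (L F : subset_of G) : subset_of G :=
  fun z => exists l f, [/\ L l, F f & z = l + f].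

(* (ii) => (i): a uniformly discrete set meets each translate x + V of a small
   neighbourhood V in at most one point, and finitely many translates cover a
   compact set.
   (iii) => (ii): iterating Λ - Λ ⊆ Λ + F gives (Λ-Λ-Λ) - (Λ-Λ-Λ) ⊆ Λ + F' with F'
   finite, and Λ + F' is locally finite. *)
From mathcomp Require Import all_boot all_order all_algebra.
From Stdlib Require List.
From Stdlib Require Import Classical.
Set Implicit Arguments. Unset Strict Implicit. Unset Printing Implicit Defensive.
Import GRing.Theory.
Local Open Scope ring_scope.

Lemma finite_set_image2 (T : Type) (op : T -> T -> T) (A B : subset_of T) :
  finite_set A -> finite_set B ->
  finite_set (fun z => exists a b, [/\ A a, B b & z = op a b]).
Proof.
move=> [sa Ha] [sb Hb]; exists (List.flat_map (fun a => List.map (op a) sb) sa).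
move=> z [a [b [Aa Bb ->]]]; apply/List.in_flat_map; exists a; split; first exact: Ha.
by apply: List.in_map; exact: Hb.
Qed.

Lemma finite_set_cover_subsingletons (I T : Type) (s : list I) (P : I -> T -> Prop) :
  (forall i z z', List.In i s -> P i z -> P i z' -> z = z') ->
  finite_set (fun z => exists i, List.In i s /\ P i z).
Proof.
elim: s => [|i s IHs] Huniq; first by exists nil => z [i [[] _]].
have [l Hl] : finite_set (fun z => exists j, List.In j s /\ P j z).
  by apply: IHs => j z z' Hj; apply: Huniq; right.
case: (classic (exists z0, P i z0)) => [[z0 Pz0]|Hnone].
- exists (z0 :: l) => z [j [[<-|Hj] Pz]].
  + by left; apply: (Huniq i) => //; left.
  + by right; apply: Hl; exists j.
- exists l => z [j [[<-|Hj] Pz]]; first by case: Hnone; exists z.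
  by apply: Hl; exists j.
Qed.

Lemma locally_finite_subset (T : Type) (open : subset_of T -> Prop) (A B : subset_of T) :
  (forall x, B x -> A x) -> locally_finite open A -> locally_finite open B.
Proof.
move=> BA HA K HK; have [s Hs] := HA K HK.
by exists s => x [Bx Kx]; apply: Hs; split => //; apply: BA.
Qed.

Lemma open_nbhd_avoiding (T : Type) (open : subset_of T -> Prop) (x : T)
    (U0 : subset_of T) (p : list T) :
  is_topology open -> hausdorff open -> open U0 -> U0 x ->
  exists U, [/\ open U, U x, forall u, U u -> U0 u &
    forall d, List.In d p -> d <> x -> ~ U d].
Proof.
move=> [_ _ Hcap _ _] Hhd oU0 U0x.
elim: p => [|d p [U [oU Ux UU0 Hp]]]; first by exists U0; split.
case: (classic (d = x)) => [dx|dnx].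
  by exists U; split=> // e [<-|He] //; exact: Hp.
have [A [B [oA oB Ax Bd AB]]] := Hhd x d (fun e => dnx (esym e)).
exists (fun y => U y /\ A y); split.
- exact: Hcap.
- by split.
- by move=> u [Uu _]; apply: UU0.
- move=> e [<-|He] Hne [Ue Ae]; first exact: AB d Ae Bd.
  exact: (Hp e He Hne Ue).
Qed.

Section TopologicalGroup.

Variables (G : zmodType) (open : subset_of G -> Prop).
Hypothesis top : top_group open.

Lemma open_translate (W : subset_of G) (a : G) :
  open W -> open (fun y => W (y - a)).
Proof.
have [[_ _ _ Hcup Hext] Hsub] := top; move=> oW.
pose J := { U : subset_of G | open U /\ forall u, U u -> W (u - a) }.
apply: (Hext (fun x => exists j : J, proj1_sig j x)); last first.
  by apply: Hcup => j; exact: (proj1 (proj2_sig j)).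
move=> x; split; first by move=> [[U [_ HU]] /= Ux]; exact: HU.
move=> Wx; have [U [V [oU oV Ux Va HUV]]] := Hsub x a W oW Wx.
by exists (exist _ U (conj oU (fun u Uu => HUV u a Uu Va))).
Qed.

Lemma compact_translate (K : subset_of G) (c : G) :
  compact open K -> compact open (fun y => K (y + c)).
Proof.
move=> HK I U HU Hcov.
have [|s Hs] := HK I (fun i x => U i (x - c)) (fun i => open_translate c (HU i)).
  by move=> x Kx; apply: Hcov; rewrite /= subrK.
exists s => y Ky; have [i [Hi Ui]] := Hs _ Ky; exists i; split => //.
by rewrite addrK in Ui.
Qed.

Lemma locally_finite_plus_set (A F : subset_of G) :
  locally_finite open A -> finite_set F -> locally_finite open (plus_set A F).
Proof.
move=> HA [sF HF].
suff: locally_finite open (plus_set A (fun f => List.In f sF)).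
  by apply: locally_finite_subset => z [l [f [Al Ff ->]]]; exists l, f; split => //; apply: HF.
move=> K HK; elim: sF {HF} => [|f sF [s Hs]].
  by exists nil => z [[l [f [_ [] _]]] _].
have [s1 Hs1] := HA _ (compact_translate (c := f) HK).
exists (List.map (fun y => y + f) s1 ++ s).
move=> z [[l [g [Al [<-|Hg] ->]]] Kz].
  by apply: List.in_or_app; left; apply: List.in_map; apply: Hs1.
by apply: List.in_or_app; right; apply: Hs; split=> //; exists l, g.
Qed.

Lemma nbhd0_diff_sub (U : subset_of G) : open U -> U 0 ->
  exists V, [/\ open V, V 0 & forall u v, V u -> V v -> U (u - v)].
Proof.
have [[_ _ Hcap _ _] Hsub] := top; move=> oU U0.
have := Hsub 0 0 U oU; rewrite subrr => /(_ U0) [U1 [V1 [oU1 oV1 U10 V10 HUV]]].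
exists (fun x => U1 x /\ V1 x); split; first exact: Hcap.
- by split.
- by move=> u v [U1u _] [_ V1v]; apply: HUV.
Qed.

Lemma locally_finite_of_uniformly_discrete (A : subset_of G) :
  uniformly_discrete open A -> locally_finite open A.
Proof.
move=> [U [oU U0 HU]] K HK.
have [V [oV V0 HV]] := nbhd0_diff_sub oU U0.
have [|s Hs] := HK G (fun x y => V (y - x)) (fun x => open_translate x oV).
  by move=> x _; exists x; rewrite /= subrr.
have [|l Hl] := @finite_set_cover_subsingletons G G s (fun x z => A z /\ V (z - x)).
  move=> x z z' _ [Az Vz] [Az' Vz']; apply: esym; apply: (HU z Az z' Az').
  exists ((z' - x) - (z - x)); split; first exact: HV.
  have -> : (z' - x) - (z - x) = z' - z by rewrite opprB addrA subrK.
  by rewrite addrC subrK.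
by exists l => z [Az Kz]; apply: Hl; have [x [Hx Vx]] := Hs z Kz; exists x.
Qed.

Lemma uniformly_discrete_of_locally_finite_differences (A S : subset_of G) :
  hausdorff open -> locally_compact open -> locally_finite open S ->
  (forall x y, A x -> A y -> S (y - x)) -> uniformly_discrete open A.
Proof.
move=> Hhd Hlc HS HA.
have [U0 [K0 [oU0 U00 cK0 U0K0]]] := Hlc 0.
have [p Hp] := HS K0 cK0.
have [U [oU U0' UU0 Hp']] := open_nbhd_avoiding p (proj1 top) Hhd oU0 U00.
exists U; split=> // x Ax y Ay [u [Uu yxu]].
have yx : y - x = u by rewrite yxu addrC addKr.
case: (classic (u = 0)) => [u0|un0]; first by rewrite yxu u0 addr0.
exfalso; apply: (Hp' u _ un0 Uu); apply: Hp; split.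
  by rewrite -yx; exact: HA.
by apply: U0K0; apply: UU0.
Qed.

End TopologicalGroup.

Section Sumsets.

Variables (G : zmodType) (L F : subset_of G).
Hypothesis diff2_sub : forall z, diff2 L z -> plus_set L F z.

Lemma diff3_sub_plus_set z : diff3 L z -> plus_set L (plus_set F F) z.
Proof.
move=> [a [b [c [La Lb Lc ->]]]].
have [l1 [f1 [Ll1 Ff1 e1]]] := diff2_sub (ex_intro _ a (ex_intro _ b (And3 La Lb erefl))).
have [l2 [f2 [Ll2 Ff2 e2]]] := diff2_sub (ex_intro _ l1 (ex_intro _ c (And3 Ll1 Lc erefl))).
exists l2, (f2 + f1); split => //; first by exists f2, f1.
by rewrite e1 addrAC e2 addrA.
Qed.

Lemma plus_set_diff_sub (E : subset_of G) x y :
  plus_set L E x -> plus_set L E y ->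
  plus_set L (fun w => exists a b, [/\ plus_set F E a, E b & w = a - b]) (y - x).
Proof.
move=> [l [g [Ll Eg ->]]] [l' [g' [Ll' Eg' ->]]].
have [l4 [f4 [Ll4 Ff4 e4]]] := diff2_sub (ex_intro _ l' (ex_intro _ l (And3 Ll' Ll erefl))).
exists l4, ((f4 + g') - g); split => //; first by exists (f4 + g'), g; split => //; exists f4, g'.
by rewrite opprD addrACA e4 -!addrA.
Qed.

End Sumsets.

Lemma translate_sub_diff3 (G : zmodType) (L : subset_of G) (l0 : G) :
  L l0 -> forall x, L x -> plus_set (diff3 L) (fun f => f = l0 + l0) x.
Proof.
move=> Ll0 x Lx; exists (x - (l0 + l0)), (l0 + l0); split => //; last by rewrite subrK.
by exists x, l0, l0; split => //; rewrite opprD addrA.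
Qed.

Lemma diff2_sub_plus_set_diff3 (G : zmodType) (L K : subset_of G) :
  (forall g, exists l k, [/\ L l, K k & g = l + k]) ->
  forall z, diff2 L z -> plus_set L (fun k => diff3 L k /\ K k) z.
Proof.
move=> HLK z [a [b [La Lb e]]]; have [l [k [Ll Kk ez]]] := HLK z.
exists l, k; split => //; split => //; exists a, b, l; split => //.
by rewrite -e ez addrC addKr.
Qed.

Theorem lemma7p1 (G : zmodType) (open : subset_of G -> Prop) (L : subset_of G) :
  sigma_compact_LCA open -> relatively_dense open L ->
  (locally_finite open (diff3 L) <-> uniformly_discrete open (diff3 L)) /\
  (uniformly_discrete open (diff3 L) <->
     (locally_finite open L /\
      exists F : subset_of G, finite_set F /\
        forall z, diff2 L z -> plus_set L F z)).
Proof.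
move=> [top Hhd Hlc _] [K [cK HLK]].
have i_iii : locally_finite open (diff3 L) -> locally_finite open L /\
    exists F, finite_set F /\ forall z, diff2 L z -> plus_set L F z.
  move=> HD3; have [l0 [_ [Ll0 _ _]]] := HLK 0; split.
    apply: locally_finite_subset (translate_sub_diff3 Ll0) _.
    by apply: locally_finite_plus_set => //; exists [:: l0 + l0] => f ->; left.
  exists (fun k => diff3 L k /\ K k); split; first exact: HD3.
  exact: diff2_sub_plus_set_diff3.
have iii_ii : (locally_finite open L /\
    exists F, finite_set F /\ forall z, diff2 L z -> plus_set L F z) ->
    uniformly_discrete open (diff3 L).
  move=> [HL [F [HF HLF]]].
  pose F2 := plus_set F F.
  pose S := plus_set L (fun w => exists a b, [/\ plus_set F F2 a, F2 b & w = a - b]).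
  have HF2 : finite_set F2 by apply: finite_set_image2.
  have HF3 : finite_set (plus_set F F2) by apply: finite_set_image2.
  apply: (@uniformly_discrete_of_locally_finite_differences _ _ top _ S Hhd Hlc).
    by apply: (locally_finite_plus_set top HL); apply: (finite_set_image2 (fun a b => a - b)).
  by move=> x y Dx Dy; apply: plus_set_diff_sub => //; apply: diff3_sub_plus_set.
have ii_i := @locally_finite_of_uniformly_discrete G open top (diff3 L).
split; split.
- by move=> /i_iii /iii_ii.
- exact: ii_i.
- by move=> /ii_i /i_iii.
- exact: iii_ii.
Qed.
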